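(* Let $m,n,\rho$ be fixed. Consider any $l$ with $0<l\le n$ and any pairs $(n_i,\rho_i)$, $0\le i\le l-1$, of integers with $0<n_i\le n$, $0\le\rho_i\le n_i$, $n_i+\rho_i\le m$ for all $i$, $\sum_{i=0}^{l-1}n_i=n$ and $\sum_{i=0}^{l-1}\rho_i=\rho$. Then $$K_{\mathrm R}(q^m,n,\rho)\le\min_{\{(n_i,\rho_i)\}}q^{\,m(n-\rho)-\sum_i\rho_i(n_i-\rho_i)},$$ the minimum being taken over all such families of pairs.
   Context: The rank $\mathrm{rk}(\mathbf x)$ of $\mathbf x\in\mathrm{GF}(q^m)^n$ is the maximum number of its coordinates linearly independent over $\mathrm{GF}(q)$, and $d_{\mathrm R}(\mathbf x,\mathbf y)=\mathrm{rk}(\mathbf x-\mathbf y)$. $K_{\mathrm R}(q^m,n,\rho)$ is the minimum cardinality of a code in $\mathrm{GF}(q^m)^n$ with rank covering radius $\rho$ (covering radius $=\max_{\mathbf x}\min_{\mathbf c\in C}d_{\mathrm R}(\mathbf x,\mathbf c)$). *)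

From HB Require Import structures.
From mathcomp Require Import all_boot all_order all_algebra all_field.
Set Implicit Arguments. Unset Strict Implicit. Unset Printing Implicit Defensive.
Import GRing.Theory.
Local Open Scope ring_scope.

Section RankMetric.
Variables (F : finFieldType) (L0 : fieldExtType F).
(* GF(q^m) viewed as a finite type, an extension of GF(q) = F *)
Local Notation L := (finvect_type L0).

Definition rk n (x : 'rV[L]_n) : nat :=
  \max_(S : {set 'I_n} | free [seq (x 0 i : L0) | i <- enum S]) #|S|.

Definition dR n (x y : 'rV[L]_n) : nat := rk (x - y).

Definition rcovers n (rho : nat) (C : {set 'rV[L]_n}) : bool :=
  [forall x : 'rV[L]_n, [exists c in C, (dR x c <= rho)%N]].

Definition KR n (rho : nat) : nat :=
  \big[minn/#|[set: 'rV[L]_n]|]_(C : {set 'rV[L]_n} | rcovers rho C) #|C|.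
End RankMetric.

From HB Require Import structures.
From mathcomp Require Import all_boot all_order all_algebra all_field.
From mathcomp Require Import zify.

(* Since m(n - rho) - sum_i rho_i (n_i - rho_i) = sum_i (m - rho_i)(n_i - rho_i)
   and the rank of a concatenation is at most the sum of the ranks, it suffices
   to cover GF(q^m)^n within rank distance r, for r <= n and n + r <= m, by
   q^((m-r)(n-r)) words.  View x as the GF(q)-linear map X : u |-> sum_i u_i x_i
   from GF(q)^n, whose image is spanned by the entries of x.  Let E = GF(q^h),
   h = m - r (the roots of X^(q^h) - X in a splitting field), embed
   G : GF(q)^n -> E and phi : E -> GF(q^m), and let psi be a left inverse of phi;
   its kernel has dimension r.  The words are phi o A o G, for the linearized
   polynomials A z = sum_(i < n-r) a_i z^(q^i) over E.  Given X, the image of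
   (1 - phi psi) X lies in ker psi, so this map vanishes on a subspace U of
   dimension n - r.  A linearized polynomial with n - r coefficients vanishing
   on an (n-r)-dimensional subspace is zero, so A can interpolate
   psi X G^-1 on G(U); then X - phi A G vanishes on U and has rank at most r. *)

Set Implicit Arguments. Unset Strict Implicit. Unset Printing Implicit Defensive.
Import GRing.Theory.
Local Open Scope ring_scope.

Section FiniteFieldPowers.
Variable F : finFieldType.

Lemma pnat_pchar_card_expn j : [pchar F].-nat (#|F| ^ j)%N.
Proof.
have [p p_pr pcharFp] := finPcharP F.
rewrite (eq_pnat _ (pcharf_eq pcharFp)) (card_pprimeChar pcharFp) -expnM.
by rewrite pnatX (pnat_id p_pr).
Qed.

Lemma natr_card_expn j : (0 < j)%N -> (#|F| ^ j)%:R = 0 :> F.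
Proof.
move=> j_gt0; apply/eqP/contraT.
rewrite natf_neq0_pchar => /(pnat_1 (pnat_pchar_card_expn j))/eqP.
by rewrite -(expn0 #|F|) eqn_exp2l ?finNzRing_gt1 // -(prednK j_gt0).
Qed.

Lemma expf_card_expn (c : F) j : c ^+ (#|F| ^ j) = c.
Proof. by elim: j => [|j IHj]; rewrite ?expr1 // expnSr exprM IHj expf_card. Qed.

Lemma separable_Xcard_subX h :
  (0 < h)%N -> separable_poly ('X^(#|F| ^ h) - 'X : {poly F}).
Proof.
move=> h_gt0; rewrite unlock derivB derivXn derivX -mulr_natr -polyC_natr.
rewrite natr_card_expn // mulr0 sub0r -(scaleN1r (1 : {poly F})).
by rewrite coprimepZr ?oppr_eq0 ?oner_eq0 ?coprimep1.
Qed.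

End FiniteFieldPowers.

Section Frobenius.
Variables (F : finFieldType) (E : fieldExtType F).

Definition frob j (x : E) := x ^+ (#|F| ^ j).

Fact frob_is_zmod_morphism j : zmod_morphism (frob j).
Proof.
have pnatE : [pchar E].-nat (#|F| ^ j)%N.
  by rewrite (eq_pnat _ (pchar_lalg E)) pnat_pchar_card_expn.
by move=> x y; rewrite /frob exprDn_pchar ?exprNn_pchar.
Qed.

Fact frob_is_monoid_morphism j : monoid_morphism (frob j).
Proof. by split=> [|x y]; rewrite /frob ?expr1n ?exprMn. Qed.

Fact frob_is_scalable j : scalable (frob j).
Proof. by move=> c x; rewrite /frob exprZn expf_card_expn. Qed.

HB.instance Definition _ j :=
  GRing.isZmodMorphism.Build E E (frob j) (frob_is_zmod_morphism j).
HB.instance Definition _ j :=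
  GRing.isMonoidMorphism.Build E E (frob j) (frob_is_monoid_morphism j).
HB.instance Definition _ j :=
  GRing.isScalable.Build F E E *:%R (frob j) (frob_is_scalable j).

End Frobenius.

Lemma finField_ext_of_dim (F : finFieldType) h :
  (0 < h)%N -> exists E : fieldExtType F, \dim {:E} = h.
Proof.
move=> h_gt0; set Q := (#|F| ^ h)%N; set P : {poly F} := 'X^Q - 'X.
have Q_gt1 : (1 < Q)%N by rewrite (ltn_exp2l 0) ?finNzRing_gt1.
have sizeP : size P = Q.+1.
  by rewrite size_polyDl ?size_polyXn // size_polyN size_polyX ltnS.
have P_neq0 : P != 0 by rewrite -size_poly_eq0 sizeP.
have [S [zs DzS _]] := FinSplittingFieldFor P_neq0.
pose R : {subfield S} := fixedSpace (linfun (@frob F S h)).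
exists (subvs_of R).
have R_zs : (R : {vspace finvect_type S}) =i zs.
  move=> x; rewrite -root_prod_XsubC -(eqp_root DzS) (sameP fixedSpaceP eqP).
  by rewrite lfunE /= rootE rmorphB /= map_polyXn map_polyX !hornerE subr_eq0.
have uniq_zs : uniq zs.
  rewrite -separable_prod_XsubC -(eqp_separable DzS) separable_map.
  exact: separable_Xcard_subX.
have : (#|F| ^ \dim R = Q)%N.
  rewrite -(card_vspace (R : {vspace finvect_type S})) (eq_card R_zs).
  rewrite (card_uniqP (uniq_zs : @uniq (finvect_type S) zs)).
  apply: succn_inj; rewrite -(size_prod_XsubC zs id) -(eqp_size DzS).
  by rewrite size_map_poly.
by move/eqP; rewrite eqn_exp2l ?finNzRing_gt1 // dimvf => /eqP.
Qed.

Section LinearizedPolynomials.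
Variables (F : finFieldType) (E : fieldExtType F).

Definition lpoly k (a : 'I_k -> E) (x : E) : E := \sum_(i < k) a i * frob i x.

Fact lpoly_is_linear k (a : 'I_k -> E) : linear (lpoly a).
Proof.
move=> c x y; rewrite /lpoly scaler_sumr -big_split; apply: eq_bigr => i _.
by rewrite linearP mulrDr scalerAr.
Qed.

HB.instance Definition _ k (a : 'I_k -> E) :=
  GRing.isLinear.Build F E E *:%R (lpoly a) (lpoly_is_linear a).

Lemma lpoly_coef_eq0 k (a : 'I_k -> E) (Z : {vspace E}) :
  \dim Z = k -> {in Z, forall z, lpoly a z = 0} -> forall i, a i = 0.
Proof.
move=> dimZ aZ0; pose p : {poly E} := \sum_(i < k) a i *: 'X^(#|F| ^ i).
have q_gt1 := finNzRing_gt1 F.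
suff p0 : p = 0.
  move=> i; have := congr1 (coefp (#|F| ^ i)) p0.
  rewrite /= coef0 coef_sum (bigD1 i) //= coefZ coefXn eqxx mulr1.
  rewrite big1 ?addr0 // => j ji.
  by rewrite coefZ coefXn eqn_exp2l // val_eqE eq_sym (negbTE ji) mulr0.
pose zs := enum (Z : {vspace finvect_type E}).
apply: (@roots_geq_poly_eq0 _ p zs).
- apply/allP => z; rewrite (@mem_enum (finvect_type E)) => /aZ0 az0.
  rewrite /root; suff -> : p.[z] = lpoly a z by rewrite az0.
  by rewrite horner_sum; apply: eq_bigr => i _; rewrite hornerZ hornerXn.
- exact: enum_uniq.
rewrite /zs -(@cardE (finvect_type E)) card_vspace dimZ.
apply: leq_trans (size_sum _ _ _) _.
apply/bigmax_leqP => i _; rewrite (leq_trans (size_scale_leq _ _)) //.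
by rewrite size_polyXn ltn_exp2l.
Qed.

Lemma lpolyB k (a a' : 'I_k -> E) x :
  lpoly (fun i => a i - a' i) x = lpoly a x - lpoly a' x.
Proof. by rewrite /lpoly -sumrB; apply: eq_bigr => i _; rewrite mulrBl. Qed.

Lemma lpoly_interpolation k (Z : {vspace E}) (g : 'Hom(E, E)) :
  \dim Z = k -> exists a : 'I_k -> E, {in Z, lpoly a =1 g}.
Proof.
move=> <-; set b := vbasis Z.
have on_basis (f f' : 'Hom(E, E)) :
    (forall j, f (tnth b j) = f' (tnth b j)) -> {in Z, f =1 f'}.
  move=> ff'; rewrite -(span_basis (vbasisP Z)); apply/span_lfunP => _ /tnthP[j ->].
  exact: ff'.
pose T := {ffun 'I_(\dim Z) -> finvect_type E}.
pose eval (a : T) : T := [ffun j => lpoly a (tnth b j)].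
have eval_inj : injective eval.
  move=> a a' /ffunP eq_aa'; apply/ffunP => i; apply/eqP; rewrite -subr_eq0; apply/eqP.
  apply: (lpoly_coef_eq0 (a := fun i => a i - a' i) (erefl (\dim Z))) => z Zz.
  have := on_basis (linfun (lpoly (fun i => a i - a' i))) 0 _ z Zz.
  rewrite !lfunE /= => -> //= j; rewrite lfunE /= (lpolyB (a : 'I__ -> E) a').
  by have := eq_aa' j; rewrite !ffunE => ->; rewrite subrr zero_lfunE.
have [inv _ invK] := injF_bij eval_inj.
exists (inv [ffun j => g (tnth b j)]) => z Zz.
have := on_basis (linfun (lpoly (inv [ffun j => g (tnth b j)]))) g _ z Zz.
rewrite lfunE => -> // j; rewrite lfunE /=.
by have := congr1 (fun f : T => f j) (invK [ffun j => g (tnth b j)]); rewrite !ffunE.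
Qed.

End LinearizedPolynomials.

Section LinearAlgebra.
Variable K : fieldType.

Lemma dim_lker_limg (U V : vectType K) (f : 'Hom(U, V)) :
  (\dim (lker f) + \dim (limg f) = \dim {:U})%N.
Proof. by rewrite -(limg_ker_dim f fullv) capfv. Qed.

Lemma dim_rV n : \dim {:'rV[K]_n} = n.
Proof. by rewrite dimvf /dim /= mul1n. Qed.

Lemma exists_subspace_of_dim (V : vectType K) (U : {vspace V}) k :
  (k <= \dim U)%N -> exists2 Z : {vspace V}, (Z <= U)%VS & \dim Z = k.
Proof.
move=> le_kU; exists <<take k (vbasis U)>>%VS.
  by apply/span_subvP => v /mem_take /vbasis_mem.
have /eqP -> : free (take k (vbasis U)).
  apply: (@catl_free _ _ (drop k (vbasis U))).
  by rewrite cat_take_drop (basis_free (vbasisP U)).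
by rewrite size_takel ?size_tuple.
Qed.

Lemma exists_lker0 (U V : vectType K) :
  (\dim {:U} <= \dim {:V})%N -> exists f : 'Hom(U, V), lker f == 0%VS.
Proof.
move=> le_UV; have [Y _ dimY] := exists_subspace_of_dim le_UV.
have [f0 Df0] := linear_of_free (vbasis {:U}) (vbasis Y).
exists (linfun f0).
have limg_f : limg (linfun f0) = Y.
  rewrite -(span_basis (vbasisP {:U})) limg_span (eq_map (lfunE f0)).
  by rewrite Df0 ?size_tuple ?dimY ?(basis_free (vbasisP _)) ?(span_basis (vbasisP Y)).
by rewrite -dimv_eq0 -(eqn_add2r (\dim (limg (linfun f0)))) dim_lker_limg limg_f dimY.
Qed.

End LinearAlgebra.

Section RowCombinations.
Variables (K : fieldType) (V : vectType K).

Definition comb n (x : 'rV[V]_n) (u : 'rV[K]_n) : V := \sum_i u 0 i *: x 0 i.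

Fact comb_is_linear n (x : 'rV[V]_n) : linear (comb x).
Proof.
move=> c u v; rewrite /comb scaler_sumr -big_split; apply: eq_bigr => i _.
by rewrite !mxE scalerDl scalerA.
Qed.

HB.instance Definition _ n (x : 'rV[V]_n) :=
  GRing.isLinear.Build K 'rV[K]_n V *:%R (comb x) (comb_is_linear x).

Definition combL n (x : 'rV[V]_n) : 'Hom('rV[K]_n, V) := linfun (comb x).

Definition entries_span n (x : 'rV[V]_n) : {vspace V} :=
  span [seq x 0 i | i <- enum 'I_n].

Definition row_of_hom n (f : 'Hom('rV[K]_n, V)) : 'rV[V]_n :=
  \row_i f (delta_mx 0 i).

Lemma combL_row_of_hom n (f : 'Hom('rV[K]_n, V)) : combL (row_of_hom f) = f.
Proof.
apply/lfunP => u; rewrite lfunE /= {2}[u]row_sum_delta linear_sum.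
by apply: eq_bigr => i _; rewrite mxE linearZ.
Qed.

Lemma combLB n (x y : 'rV[V]_n) : combL (x - y) = combL x - combL y.
Proof.
apply/lfunP => u; rewrite add_lfunE opp_lfunE !lfunE /= -sumrB.
by apply: eq_bigr => i _; rewrite !mxE scalerBr.
Qed.

Lemma limg_combL n (x : 'rV[V]_n) : limg (combL x) = entries_span x.
Proof.
apply/eqP; rewrite eqEsubv; apply/andP; split.
  apply/subvP => _ /memv_imgP[u _ ->]; rewrite lfunE /=.
  apply: rpred_sum => i _; apply/rpredZ/memv_span.
  by apply: map_f; rewrite mem_enum.
apply/span_subvP => _ /mapP[i _ ->].
have -> : x 0 i = combL x (delta_mx 0 i).
  rewrite lfunE /= /comb (bigD1 i) //= big1 ?addr0 => [|j ji].
    by rewrite mxE !eqxx scale1r.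
  by rewrite mxE (negbTE ji) andbF scale0r.
exact: memv_img (memvf _).
Qed.

Lemma entries_span_row_mx n1 n2 (a : 'rV[V]_n1) (b : 'rV[V]_n2) :
  (entries_span (row_mx a b) <= entries_span a + entries_span b)%VS.
Proof.
apply/span_subvP => _ /mapP[i _ ->]; rewrite -[i]splitK.
case: (split i) => j; rewrite ?row_mxEl ?row_mxEr.
  by apply/(subvP (addvSl _ _))/memv_span/map_f; rewrite mem_enum.
by apply/(subvP (addvSr _ _))/memv_span/map_f; rewrite mem_enum.
Qed.

End RowCombinations.

Section Approximation.
Variables (F : finFieldType) (E : fieldExtType F) (V : vectType F) (n k : nat).
Variables (G : 'Hom('rV[F]_n, E)) (phi : 'Hom(E, V)) (psi : 'Hom(V, E)).
Hypotheses (G_inj : lker G == 0%VS) (phiK : cancel phi psi).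
Hypothesis dim_lker_psi : (\dim (lker psi) + k = n)%N.

Lemma approx_by_lpoly (X : 'Hom('rV[F]_n, V)) :
  exists a : 'I_k -> E,
    (\dim (limg (X - (phi \o linfun (lpoly a) \o G)%VF)%R) <= \dim (lker psi))%N.
Proof.
pose W := ((\1 - (phi \o psi)%VF) \o X)%VF.
have W_psi : (limg W <= lker psi)%VS.
  apply/subvP => _ /memv_imgP[u _ ->]; rewrite memv_ker !lfunE /= add_lfunE opp_lfunE.
  by rewrite !lfunE /= linearB /= phiK subrr.
have [U sUW dimU] : exists2 U, (U <= lker W)%VS & \dim U = k.
  apply: exists_subspace_of_dim; have := dim_lker_limg W; rewrite dim_rV.
  have := dimvS W_psi; lia.
have dimGU : \dim (G @: U) = k by rewrite limg_dim_eq // (eqP G_inj) capv0.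
have [a Ha] := lpoly_interpolation (psi \o X \o G^-1)%VF dimGU.
exists a.
have sU : (U <= lker (X - (phi \o linfun (lpoly a) \o G)%VF)%R)%VS.
  apply/subvP => u Uu; rewrite memv_ker add_lfunE opp_lfunE !lfunE /=.
  rewrite comp_lfunE lfunE /= Ha ?memv_img // !comp_lfunE lker0_lfunK //.
  have := subvP sUW u Uu.
  by rewrite memv_ker /W !lfunE /= add_lfunE opp_lfunE !lfunE.
have := dim_lker_limg (X - (phi \o linfun (lpoly a) \o G)%VF)%R; rewrite dim_rV.
have := dimvS sU; lia.
Qed.

End Approximation.

Section RankCovering.
Variables (F : finFieldType) (L0 : fieldExtType F).
Local Notation L := (finvect_type L0).
Local Notation m := (\dim {:L0}).

Definition covering n (C : {set 'rV[L]_n}) r :=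
  forall x : 'rV[L]_n, exists2 c, c \in C & (\dim (entries_span (x - c)) <= r)%N.

Lemma rk_le_dim_entries_span n (x : 'rV[L]_n) : (rk x <= \dim (entries_span x))%N.
Proof.
apply/bigmax_leqP => S /eqP free_S.
rewrite cardE -(size_map (fun i => x 0 i : L0)) -free_S.
apply/dimvS/span_subvP => _ /mapP[i _ ->].
by apply/memv_span/map_f; rewrite mem_enum.
Qed.

Lemma KR_le_covering n r (C : {set 'rV[L]_n}) :
  covering C r -> (KR L0 n r <= #|C|)%N.
Proof.
move=> covC; have rcC : rcovers r C.
  apply/forallP => x; have [c Cc le_xc] := covC x; apply/existsP; exists c.
  by rewrite Cc /dR (leq_trans (rk_le_dim_entries_span _)).
have := Order.TotalTheory.bigmin_le_cond #|[set: 'rV[L]_n]|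
  (fun C : {set 'rV[L]_n} => #|C|) rcC.
by rewrite minEnat.
Qed.

Lemma covering_row_mx n1 n2 r1 r2 (C1 : {set 'rV[L]_n1}) (C2 : {set 'rV[L]_n2}) :
  covering C1 r1 -> covering C2 r2 ->
  covering [set row_mx c1 c2 | c1 in C1, c2 in C2] (r1 + r2).
Proof.
move=> cov1 cov2 x; have [c1 C1c1 le1] := cov1 (lsubmx x).
have [c2 C2c2 le2] := cov2 (rsubmx x).
exists (row_mx c1 c2); first exact: imset2_f.
rewrite -[x]hsubmxK opp_row_mx add_row_mx.
apply: leq_trans (dimvS (entries_span_row_mx _ _)) _.
exact: leq_trans (dimv_add_leqif _ _).1 (leq_add le1 le2).
Qed.

Lemma block_covering n r : (r <= n)%N -> (n + r <= m)%N ->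
  exists2 C : {set 'rV[L]_n}, (#|C| <= #|F| ^ ((m - r) * (n - r)))%N & covering C r.
Proof.
move=> le_rn le_nrm; set h := (m - r)%N; set k := (n - r)%N.
have m_gt0 : (0 < m)%N := adim_gt0 _.
have h_gt0 : (0 < h)%N by rewrite /h; lia.
have [E dimE] := finField_ext_of_dim F h_gt0.
have [G G_inj] : exists G : 'Hom('rV[F]_n, E), lker G == 0%VS.
  by apply: exists_lker0; rewrite dim_rV dimE /h; lia.
have [phi phi_inj] : exists phi : 'Hom(E, L0), lker phi == 0%VS.
  by apply: exists_lker0; rewrite dimE leq_subr.
set psi := (phi^-1)%VF; have phiK : cancel phi psi := lker0_lfunK phi_inj.
have dim_lker_psi : \dim (lker psi) = r.
  have limg_psi : limg psi = fullv.
    apply/eqP; rewrite eqEsubv subvf; apply/subvP => e _.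
    by rewrite -[e]phiK memv_img ?memvf.
  have r_le_m : (r <= m)%N by lia.
  have := dim_lker_limg psi; rewrite limg_psi dimE /h.
  by rewrite -{2}(subnK r_le_m) addnC => /addnI.
pose code (a : 'I_k -> E) : 'rV[L]_n := row_of_hom (phi \o linfun (lpoly a) \o G)%VF.
exists [set code a | a : {ffun 'I_k -> finvect_type E}].
  apply: leq_trans (leq_imset_card _ _) _.
  rewrite card_ffun card_ord -(card_vspacef (Vector.class (finvect_type E))).
  by rewrite card_vspace dimE -expnM.
move=> x; have [|a le_a] := approx_by_lpoly (k := k) G_inj phiK _ (combL x).
  by rewrite dim_lker_psi subnKC.
exists (code [ffun j => a j]); first exact: imset_f.
rewrite -limg_combL combLB combL_row_of_hom -dim_lker_psi.
suff -> : linfun (lpoly [ffun j => a j]) = linfun (lpoly a) by [].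
by apply/lfunP => e; rewrite !lfunE; apply: eq_bigr => i _; rewrite ffunE.
Qed.

Lemma sum_covering l (n_ r_ : 'I_l -> nat) N :
    (forall i, r_ i <= n_ i)%N -> (forall i, n_ i + r_ i <= m)%N ->
    (\sum_(i < l) n_ i = N)%N ->
  exists2 C : {set 'rV[L]_N},
    (#|C| <= #|F| ^ (\sum_(i < l) (m - r_ i) * (n_ i - r_ i)))%N &
    covering C (\sum_(i < l) r_ i).
Proof.
elim: l n_ r_ N => [|l IHl] n_ r_ N le_rn le_nrm.
  rewrite big_ord0 => <-; exists [set 0]; first by rewrite cards1 big_ord0.
  move=> x; exists 0; first by rewrite inE.
  by rewrite big_ord0 /entries_span enum_ord0 span_nil dimv0.
rewrite big_ord_recr /= => <-.
have [C1 card_C1 cov1] := IHl (n_ \o widen_ord (leqnSn l)) (r_ \o widen_ord (leqnSn l)) _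
  (fun i => le_rn _) (fun i => le_nrm _) erefl.
have [C2 card_C2 cov2] := block_covering (le_rn ord_max) (le_nrm ord_max).
exists [set row_mx c1 c2 | c1 in C1, c2 in C2].
  rewrite big_ord_recr expnD curry_imset2X (leq_trans (leq_imset_card _ _)) //.
  by rewrite cardsX leq_mul.
by rewrite big_ord_recr; exact: covering_row_mx.
Qed.

End RankCovering.

Local Close Scope ring_scope.

Lemma sum_mulnB_subn l (n_ r_ : 'I_l -> nat) M :
    (forall i, r_ i <= n_ i)%N -> (forall i, r_ i <= M)%N ->
  (\sum_(i < l) (M - r_ i) * (n_ i - r_ i) =
   M * (\sum_(i < l) n_ i - \sum_(i < l) r_ i) - \sum_(i < l) r_ i * (n_ i - r_ i))%N.
Proof.
move=> le_rn le_rM; rewrite -sumnB // big_distrr -sumnB /=.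
  by apply: eq_bigr => i _; rewrite mulnBl.
by move=> i _; rewrite leq_mul2r le_rM orbT.
Qed.

Theorem proposition10 (q m n rho : nat) (F : finFieldType) (L : fieldExtType F)
  (hq : #|F| = q) (hm : \dim (fullv : {vspace L}) = m) :
  forall (l : nat) (n_ rho_ : 'I_l -> nat),
    0 < l <= n ->
    (forall i, 0 < n_ i <= n) ->
    (forall i, rho_ i <= n_ i) ->
    (forall i, n_ i + rho_ i <= m) ->
    \sum_(i < l) n_ i = n ->
    \sum_(i < l) rho_ i = rho ->
    KR L n rho <= q ^ (m * (n - rho) - \sum_(i < l) rho_ i * (n_ i - rho_ i)).
Proof.
move=> l n_ rho_ _ _ le_rn le_nrm sum_n sum_rho; subst q m n rho.
have [C card_C cov_C] := sum_covering le_rn le_nrm erefl.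
apply: leq_trans (KR_le_covering cov_C) (leq_trans card_C _).
rewrite leq_exp2l ?finNzRing_gt1 // sum_mulnB_subn // => i.
exact: leq_trans (leq_addl _ _) (le_nrm i).
Qed.
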